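(* Let $p\in[1,\infty]$ and let $\{E_i\}_{i\in I}$ be a nonempty family of locally convex spaces. (i) If $I=\omega$ is countable, then the topological product $\prod_{i\in\omega}E_i$ has the $wCSP_p$ if and only if every $E_i$ has the $wCSP_p$. (ii) The locally convex direct sum $\bigoplus_{i\in I}E_i$ has the $wCSP_p$ if and only if every $E_i$ has the $wCSP_p$.
   Context: Locally convex spaces are Hausdorff over $\mathbb R$ or $\mathbb C$. For $p\in[1,\infty]$, a sequence $(x_n)$ in a locally convex space $E$ is weakly $p$-summable if for every $\chi\in E'$ the sequence $(\chi(x_n))_n$ lies in $\ell_p$ (if $p<\infty$) or in $c_0$ (if $p=\infty$). A sequence $(x_n)$ is weakly $p$-Cauchy if for every pair of strictly increasing sequences $(k_n),(j_n)$ in $\omega$ the sequence $(x_{k_n}-x_{j_n})_n$ is weakly $p$-summable. $E$ has the weak Cauchy subsequence property of order $p$ ($wCSP_p$) if every bounded sequence in $E$ has a weakly $p$-Cauchy subsequence. *)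

From HB Require Import structures.
From mathcomp Require Import all_boot all_order all_algebra.
From mathcomp Require Import complex.
From mathcomp Require Import all_classical all_reals all_analysis.
Set Implicit Arguments.
Unset Strict Implicit.
Unset Printing Implicit Defensive.
Import Order.TTheory GRing.Theory Num.Theory.
Import numFieldNormedType.Exports.
Local Open Scope ring_scope.
Local Open Scope classical_set_scope.

Definition lcs_field (R : realType) (b : bool) : numFieldType :=
  if b then (R[i] : numFieldType) else (R : numFieldType).

Definition absK (R : realType) (b : bool) : lcs_field R b -> R :=
  match b return lcs_field R b -> R with
  | true => fun z : R[i] => complex.Re `|z|
  | false => fun x : R => `|x|
  end.

Section WCSP.
Context {R : realType} {b : bool}.
Local Notation K := (lcs_field R b).

(** membership of a nonnegative real sequence [a] (here a = |chi(x_n)|)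
    in l_p (p < oo), resp. c_0 (p = oo) *)
Definition lp_seq (p : \bar R) (a : nat -> R) : Prop :=
  match p with
  | EFin r => cvgn (series (fun n => a n `^ r))
  | +oo%E => a @ \oo --> (0 : R)
  | -oo%E => False
  end.

Context {E : preTopologicalLmodType K}.

Definition weakly_summable (p : \bar R) (x : nat -> E) : Prop :=
  forall chi : {linear E -> K^o}, continuous chi ->
    lp_seq p (fun n => absK (chi (x n))).

Definition weakly_Cauchy (p : \bar R) (x : nat -> E) : Prop :=
  forall k j : nat -> nat,
    {homo k : m n / (m < n)%N} -> {homo j : m n / (m < n)%N} ->
    weakly_summable p (fun n => x (k n) - x (j n)).

Definition tvs_bounded (B : set E) : Prop :=
  forall U : set E, nbhs (0 : E) U ->
    exists2 s : K, 0 < s & forall t : K, s < t -> B `<=` ( *:%R t) @` U.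

Definition wCSP (p : \bar R) : Prop :=
  forall x : nat -> E, tvs_bounded (range x) ->
    exists2 f : nat -> nat, {homo f : m n / (m < n)%N} &
      weakly_Cauchy p (x \o f).

End WCSP.

Section Product.
Context {K : numFieldType} {I : Type} (E : I -> tvsType K).

Definition prodLCS := forall i, E i.

HB.instance Definition _ :=
  Topological.copy prodLCS (prod_topology (fun i => (E i : topologicalType))).

Let pzero : prodLCS := fun i => 0.
Let padd (f g : prodLCS) : prodLCS := fun i => f i + g i.
Let popp (f : prodLCS) : prodLCS := fun i => - f i.
Let pscale (k : K) (f : prodLCS) : prodLCS := fun i => k *: f i.

Let paddA : associative padd.
Proof. by move=> f g h; apply: functional_extensionality_dep => i; exact: addrA. Qed.
Let paddC : commutative padd.
Proof. by move=> f g; apply: functional_extensionality_dep => i; exact: addrC. Qed.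
Let padd0 : left_id pzero padd.
Proof. by move=> f; apply: functional_extensionality_dep => i; exact: add0r. Qed.
Let paddN : left_inverse pzero popp padd.
Proof. by move=> f; apply: functional_extensionality_dep => i; exact: addNr. Qed.

HB.instance Definition _ := GRing.isZmodule.Build prodLCS paddA paddC padd0 paddN.

Let pscaleA a c f : pscale a (pscale c f) = pscale (a * c) f.
Proof. by apply: functional_extensionality_dep => i; exact: scalerA. Qed.
Let pscale1 : left_id 1 pscale.
Proof. by move=> f; apply: functional_extensionality_dep => i; exact: scale1r. Qed.
Let pscaleDr : right_distributive pscale +%R.
Proof. by move=> a f g; apply: functional_extensionality_dep => i; exact: scalerDr. Qed.
Let pscaleDl f : {morph pscale^~ f : a c / a + c}.
Proof. by move=> a c; apply: functional_extensionality_dep => i; exact: scalerDl. Qed.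

HB.instance Definition _ :=
  GRing.Zmodule_isLmodule.Build K prodLCS pscaleA pscale1 pscaleDr pscaleDl.

End Product.

Section DirectSum.
Context {K : numFieldType} {I : Type} (E : I -> tvsType K).

Definition finsupp (f : forall i, E i) := finite_set [set i | f i != 0].

Definition dsumLCS := {f : forall i, E i | finsupp f}.

HB.instance Definition _ := gen_eqMixin dsumLCS.
HB.instance Definition _ := gen_choiceMixin dsumLCS.

Lemma dsum_eq (x y : dsumLCS) : proj1_sig x = proj1_sig y -> x = y.
Proof.
case: x => f hf; case: y => g hg /= efg; subst g.
by congr exist; exact: Prop_irrelevance.
Qed.

Let supp0 : finsupp (fun i => 0 : E i).
Proof.
apply: (sub_finite_set _ (finite_set0 I)) => i /=.
by rewrite eqxx.
Qed.

Let suppD (f g : forall i, E i) : finsupp f -> finsupp g ->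
  finsupp (fun i => f i + g i).
Proof.
move=> hf hg.
have hU : finite_set ([set i | f i != 0] `|` [set i | g i != 0]) by rewrite finite_setU.
apply: (sub_finite_set _ hU).
move=> i /= hfg; have [fi|fi] := eqVneq (f i) 0; last by left.
by right; move: hfg; rewrite fi add0r.
Qed.

Let suppN (f : forall i, E i) : finsupp f -> finsupp (fun i => - f i).
Proof.
move=> hf; apply: (sub_finite_set _ hf) => i /=.
by rewrite oppr_eq0.
Qed.

Let suppZ (k : K) (f : forall i, E i) : finsupp f -> finsupp (fun i => k *: f i).
Proof.
move=> hf; apply: (sub_finite_set _ hf) => i /=.
by apply: contraNN => /eqP ->; rewrite scaler0.
Qed.

Let dzero : dsumLCS := exist _ _ supp0.
Let dadd (x y : dsumLCS) : dsumLCS :=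
  exist _ _ (suppD (proj2_sig x) (proj2_sig y)).
Let dopp (x : dsumLCS) : dsumLCS := exist _ _ (suppN (proj2_sig x)).
Let dscale (k : K) (x : dsumLCS) : dsumLCS := exist _ _ (suppZ k (proj2_sig x)).

Let daddA : associative dadd.
Proof.
by move=> x y z; apply: dsum_eq; apply: functional_extensionality_dep => i;
  exact: addrA.
Qed.
Let daddC : commutative dadd.
Proof.
by move=> x y; apply: dsum_eq; apply: functional_extensionality_dep => i;
  exact: addrC.
Qed.
Let dadd0 : left_id dzero dadd.
Proof.
by move=> x; apply: dsum_eq; apply: functional_extensionality_dep => i;
  exact: add0r.
Qed.
Let daddN : left_inverse dzero dopp dadd.
Proof.
by move=> x; apply: dsum_eq; apply: functional_extensionality_dep => i;
  exact: addNr.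
Qed.

HB.instance Definition _ := GRing.isZmodule.Build dsumLCS daddA daddC dadd0 daddN.

Let dscaleA a c x : dscale a (dscale c x) = dscale (a * c) x.
Proof.
by apply: dsum_eq; apply: functional_extensionality_dep => i; exact: scalerA.
Qed.
Let dscale1 : left_id 1 dscale.
Proof.
by move=> x; apply: dsum_eq; apply: functional_extensionality_dep => i;
  exact: scale1r.
Qed.
Let dscaleDr : right_distributive dscale +%R.
Proof.
by move=> a x y; apply: dsum_eq; apply: functional_extensionality_dep => i;
  exact: scalerDr.
Qed.
Let dscaleDl x : {morph dscale^~ x : a c / a + c}.
Proof.
by move=> a c; apply: dsum_eq; apply: functional_extensionality_dep => i;
  exact: scalerDl.
Qed.

HB.instance Definition _ :=
  GRing.Zmodule_isLmodule.Build K dsumLCS dscaleA dscale1 dscaleDr dscaleDl.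

Definition dsinj_fun (i : I) (v : E i) : forall j, E j :=
  fun j => match pselect (i = j) with
           | left e => eq_rect i E v j e
           | right _ => 0
           end.

Let dsinj_supp (i : I) (v : E i) : finsupp (dsinj_fun v).
Proof.
apply: (sub_finite_set _ (finite_set1 i)) => j /=; rewrite /dsinj_fun.
by case: pselect => // ij; rewrite eqxx.
Qed.

Definition dsinj (i : I) (v : E i) : dsumLCS := exist _ _ (dsinj_supp v).

Definition balanced_set {M : lmodType K} (V : set M) :=
  forall t : K, `|t| <= 1 -> ( *:%R t) @` V `<=` V.

(** The locally convex direct sum topology: the finest locally convex
    topology making every J_i continuous. *)
Definition dsum_zero_nbhd (V : set dsumLCS) : Prop :=
  [/\ convex_set (V : set (convex_lmodType dsumLCS)), balanced_set V &
      forall i, nbhs (0 : E i) (@dsinj i @^-1` V)].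

Definition dsum_open (A : set dsumLCS) : Prop :=
  forall x, A x -> exists2 V, dsum_zero_nbhd V & (+%R x) @` V `<=` A.

Let dsum_openT : dsum_open setT.
Proof.
move=> x _; exists setT => //; split.
- by move=> y z l _ _; rewrite inE.
- by move=> t _ y.
- by move=> i; exact: filterT.
Qed.

Let dsum_openI : setI_closed dsum_open.
Proof.
move=> A B oA oB x [Ax Bx].
have [V [cV bV nV] VA] := oA x Ax.
have [W [cW bW nW] WB] := oB x Bx.
exists (V `&` W); last first.
  by move=> y [z [Vz Wz] <-]; split; [apply: VA | apply: WB]; exists z.
split.
- move=> y z l /set_mem[Vy Wy] /set_mem[Vz Wz]; apply/mem_set; split.
    by apply/set_mem/cV; apply/mem_set.
  by apply/set_mem/cW; apply/mem_set.
- move=> t t1 y [z [Vz Wz] <-]; split.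
    by apply: (bV t t1); exists z.
  by apply: (bW t t1); exists z.
- by move=> i; rewrite preimage_setI; apply: filterI.
Qed.

Let dsum_open_bigU (J : Type) (f : J -> set dsumLCS) :
  (forall j, dsum_open (f j)) -> dsum_open (\bigcup_j f j).
Proof.
move=> oF x [j _ fjx]; have [V nV Vf] := oF j x fjx.
by exists V => // y /Vf fy; exists j.
Qed.

HB.instance Definition _ :=
  isOpenTopological.Build dsumLCS dsum_openT dsum_openI dsum_open_bigU.

End DirectSum.

(* The "only if" directions hold because each E_i is a retract of the product
   and of the direct sum through the coordinate injection and projection.
   Conversely, a continuous functional on a countable product vanishes on all
   vectors whose first N coordinates vanish, and a bounded sequence in a
   locally convex direct sum of Hausdorff spaces lives in finitely many
   summands.  In both cases a diagonal subsequence that is weakly p-Cauchy in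
   every coordinate is weakly p-Cauchy, as l_p (resp. c_0) is closed under
   finite sums. *)

From HB Require Import structures.
From mathcomp Require Import all_boot all_order all_algebra.
From mathcomp Require Import complex.
From mathcomp Require Import all_classical all_reals all_analysis.
From mathcomp Require Import ring.
Import Order.TTheory GRing.Theory Num.Theory.
Import numFieldNormedType.Exports.
Local Open Scope ring_scope.
Local Open Scope classical_set_scope.

Section LpSeq.
Context {R : realType} {p : \bar R}.
Hypothesis p_ge1 : (1 <= p)%E.

Lemma lp_seq_le {a c : nat -> R} :
  (forall n, 0 <= c n <= a n) -> lp_seq p a -> lp_seq p c.
Proof.
case: p p_ge1 => [r| |] //= r1 hca ha.
- have r0 : 0 <= r by rewrite lee_fin in r1; apply: le_trans r1.
  apply: (series_le_cvg _ _ _ ha) => n; rewrite ?powR_ge0 //.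
  have /andP[c0 ca] := hca n.
  by apply: ge0_ler_powR => //; rewrite nnegrE // (le_trans c0 ca).
- apply: (@squeeze_cvgr _ _ _ _ (fun=> 0) a) => //; last exact: cvg_cst.
  by near=> n.
Unshelve. all: by end_near. Qed.

Lemma lp_seq0 : lp_seq p (fun=> 0).
Proof.
case: p p_ge1 => [r| |] //= r1; last exact: cvg_cst.
have r0 : r != 0 by rewrite lee_fin in r1; rewrite gt_eqF // (lt_le_trans ltr01 r1).
rewrite powR0 //; apply/cvg_ex; exists 0; apply: cvg_near_cst; near=> n.
by rewrite /series /= big1.
Unshelve. all: by end_near. Qed.

Lemma lp_seqD (a c : nat -> R) : (forall n, 0 <= a n) -> (forall n, 0 <= c n) ->
  lp_seq p a -> lp_seq p c -> lp_seq p (fun n => a n + c n).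
Proof.
case: p p_ge1 => [r| |] //= r1 a0 c0 ha hc; last first.
  by rewrite -[0 : R]addr0; exact: cvgD.
have r0 : 0 <= r by rewrite lee_fin in r1; apply: le_trans r1.
(* (a + c)^r <= (2 max(a, c))^r <= 2^r (a^r + c^r) *)
pose d n := 2 `^ r * (a n `^ r + c n `^ r).
have hd : cvgn (series d).
  have -> : d = (2 `^ r) *: ((fun n => a n `^ r) + (fun n => c n `^ r)) by [].
  by apply: is_cvg_seriesZ; rewrite seriesD; exact: is_cvgD.
apply: (series_le_cvg _ _ _ hd) => n; rewrite ?powR_ge0 //.
  by rewrite /d mulr_ge0 ?addr_ge0 ?powR_ge0.
have hm : a n + c n <= 2 * Num.max (a n) (c n).
  by rewrite mulr2n mulrDl mul1r lerD ?le_max ?lexx ?orbT.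
apply: (le_trans (ge0_ler_powR r0 _ _ hm));
  rewrite ?nnegrE ?addr_ge0 ?mulr_ge0 ?le_max ?a0 //.
rewrite powRM // ?le_max ?a0 // /d ler_wpM2l ?powR_ge0 //.
by case: (leP (a n) (c n)) => _; rewrite ?lerDl ?lerDr powR_ge0.
Qed.

Lemma lp_seq_sum {N : nat} {a : nat -> nat -> R} : (forall k n, 0 <= a k n) ->
  (forall k, (k < N)%N -> lp_seq p (a k)) ->
  lp_seq p (fun n => \sum_(k < N) a k n).
Proof.
move=> a0; elim: N => [|N IH] h.
  by under eq_fun do rewrite big_ord0; exact: lp_seq0.
under eq_fun do rewrite big_ord_recr /=.
apply: lp_seqD; last exact: h.
- by move=> n; apply: sumr_ge0.
- by [].
- by apply: IH => k kN; apply: h; rewrite ltnS ltnW.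
Qed.

End LpSeq.

Lemma lp_seq_shift {R : realType} (p : \bar R) (u : nat -> R) (i : nat) :
  lp_seq p (fun n => u (n + i)%N) -> lp_seq p u.
Proof.
case: p => [r| |] //=; last by move=> h; rewrite -(cvg_shiftn i).
move=> /cvg_ex [l hl]; rewrite -(is_cvg_series_restrict i).
apply/cvg_ex; exists l; rewrite -(cvg_shiftn i).
suff -> : [sequence \sum_(i <= k < n + i) u k `^ r]_n =
          series (fun n => u (n + i)%N `^ r) by [].
by apply/funext => n /=; rewrite -[X in \sum_(X <= _ < _) _]add0n big_addn addnK.
Qed.

Section AbsK.
Context {R : realType} {b : bool}.
Local Notation K := (lcs_field R b).

Lemma absK_ge0 (x : K) : 0 <= absK x.
Proof.
case: b x => /= x; last by [].
by have := normr_ge0 x; rewrite lecE => /andP[].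
Qed.

Lemma absKD (x y : K) : absK (x + y) <= absK x + absK y.
Proof.
case: b x y => /= x y; last exact: ler_normD.
by have := ler_normD x y; rewrite lecE => /andP[].
Qed.

Lemma absK0 : absK (0 : K) = 0.
Proof.
by case: b; [exact: (congr1 (@complex.Re R) (@normr0 _ R[i])) | exact: normr0].
Qed.

Lemma absK_sum (N : nat) (a : nat -> K) :
  absK (\sum_(k < N) a k) <= \sum_(k < N) absK (a k).
Proof.
elim: N => [|N IH]; first by rewrite !big_ord0 absK0.
by rewrite !big_ord_recr /=; apply: le_trans (absKD _ _) _; rewrite lerD2r.
Qed.

End AbsK.

Lemma increasing_geq_id {f : nat -> nat} :
  {homo f : m n / (m < n)%N} -> forall n, (n <= f n)%N.
Proof. by move=> hf; elim => [|n IH] //; apply: leq_ltn_trans IH (hf _ _ _). Qed.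

Lemma increasing_comp {f g : nat -> nat} : {homo f : m n / (m < n)%N} ->
  {homo g : m n / (m < n)%N} -> {homo f \o g : m n / (m < n)%N}.
Proof. by move=> hf hg m n mn; apply/hf/hg. Qed.

Section WeaklyCauchy.
Context {R : realType} {b : bool}.
Local Notation K := (lcs_field R b).
Implicit Types (p : \bar R).

Lemma weakly_summable_decomp {E : preTopologicalLmodType K} {p} {y : nat -> E} :
  (1 <= p)%E ->
  (forall chi : {linear E -> K^o}, continuous chi ->
     exists N (a : nat -> nat -> K),
       (forall k, (k < N)%N -> lp_seq p (fun n => absK (a k n))) /\
       (forall n, chi (y n) = \sum_(k < N) a k n)) ->
  weakly_summable p y.
Proof.
move=> p1 h chi cchi; have [N [a [ha ya]]] := h chi cchi.
apply: (lp_seq_le p1 _ (lp_seq_sum p1 (fun k n => absK_ge0 (a k n)) ha)) => n.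
by rewrite absK_ge0 ya; exact: (absK_sum N (a^~ n)).
Qed.

Lemma weakly_Cauchy_linear {E F : preTopologicalLmodType K} {p}
    {S : {linear E -> F}} {y : nat -> E} :
  continuous S -> weakly_Cauchy p y -> weakly_Cauchy p (S \o y).
Proof.
move=> cS hy k j hk hj chi cchi /=.
have cchiS : continuous (chi \o S).
  by move=> x; exact: continuous_comp (cS x) (cchi (S x)).
rewrite (_ : (fun n => _) = fun n => absK ((chi \o S) (y (k n) - y (j n)))).
  exact: hy.
by apply/funext => n /=; rewrite [S (_ - _)]linearB.
Qed.

Lemma weakly_Cauchy_tail {E : preTopologicalLmodType K} {p} {z w : nat -> E}
    {i : nat} {h : nat -> nat} :
  {homo h : m n / (m < n)%N} -> (forall n, z (n + i)%N = w (h n)) ->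
  weakly_Cauchy p w -> weakly_Cauchy p z.
Proof.
move=> hh hzw hw k j hk hj chi cchi /=; apply: (lp_seq_shift _ _ i).
have geq_i g : {homo g : m n / (m < n)%N} -> forall n, (i <= g (n + i))%N.
  by move=> hg n; apply: leq_trans (leq_addl n i) (increasing_geq_id hg _).
have shift g : {homo g : m n / (m < n)%N} ->
    {homo (fun n => g (n + i) - i)%N : m n / (m < n)%N}.
  by move=> hg m n mn; rewrite ltn_sub2rE ?geq_i // hg // ltn_add2r.
rewrite (_ : (fun n => _) = fun n =>
    absK (chi (w (h (k (n + i) - i)%N) - w (h (j (n + i) - i)%N)))); last first.
  by apply/funext => n /=; rewrite -!hzw !subnK ?geq_i.
exact: (hw _ _ (increasing_comp hh (shift _ hk)) (increasing_comp hh (shift _ hj))).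
Qed.

Lemma tvs_bounded_subseq {E : preTopologicalLmodType K} {x : nat -> E}
    (f : nat -> nat) :
  tvs_bounded (range x) -> tvs_bounded (range (x \o f)).
Proof.
move=> hx U hU; have [s s0 hs] := hx U hU; exists s => // t st _ [n _ <-].
by apply: hs => //; exists (f n).
Qed.

Lemma tvs_bounded_linear {E F : preTopologicalLmodType K} {T : {linear E -> F}}
    {x : nat -> E} :
  continuous T -> tvs_bounded (range x) -> tvs_bounded (range (T \o x)).
Proof.
move=> cT hx U hU.
have hTU : nbhs (0 : E) (T @^-1` U) by apply: cT; rewrite linear0.
have [s s0 hs] := hx _ hTU; exists s => // t st _ [n _ <-].
have [u Uu xnE] := hs t st (x n) (ex_intro2 _ _ n I erefl).
by exists (T u) => //=; rewrite -linearZ xnE.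
Qed.

Lemma wCSP_retract {E F : preTopologicalLmodType K} {p}
    {T : {linear E -> F}} {S : {linear F -> E}} :
  continuous T -> continuous S -> cancel T S ->
  wCSP (E := F) p -> wCSP (E := E) p.
Proof.
move=> cT cS TK hF x hx.
have [f hf hTx] := hF _ (tvs_bounded_linear cT hx).
exists f => //; have := weakly_Cauchy_linear cS hTx.
by have -> : S \o (T \o x \o f) = x \o f by apply/funext => n /=; rewrite TK.
Qed.

End WeaklyCauchy.

Lemma diagonal_subsequence (Q : nat -> (nat -> nat) -> Prop) :
  (forall i s, {homo s : m n / (m < n)%N} ->
     exists2 f, {homo f : m n / (m < n)%N} & Q i (s \o f)) ->
  (forall i s t h, Q i s -> {homo h : m n / (m < n)%N} ->
     (forall n, t (n + i)%N = s (h n)) -> Q i t) ->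
  exists2 d, {homo d : m n / (m < n)%N} & forall i, Q i d.
Proof.
move=> Qsub Qtail.
have F_ex i s : exists f, {homo s : m n / (m < n)%N} ->
    {homo f : m n / (m < n)%N} /\ Q i (s \o f).
  have [hs|ns] := pselect {homo s : m n / (m < n)%N}; last by exists id.
  by have [f hf Qf] := Qsub i s hs; exists f.
pose F i := projT1 (choice (F_ex i)); have hF i := projT2 (choice (F_ex i)).
(* G n is the n-th successive refinement, and d n := G n n the diagonal *)
pose fix G n := if n is n'.+1 then G n' \o F n (G n') else F 0%N id.
have G_incr n : {homo G n : m k / (m < k)%N}.
  elim: n => [|n IH] /=; first by have [] := hF 0%N id (fun m k mk => mk).
  by apply: (increasing_comp IH); have [] := hF n.+1 _ IH.
pose fix H i t := if t is t'.+1 then H i t' \o F (t' + i).+1 (G (t' + i)%N) else id.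
have GH i t : G (t + i)%N = G i \o H i t by elim: t => //= t ->.
have H_incr i t : {homo H i t : m k / (m < k)%N}.
  elim: t => [|t IH] //=; apply: (increasing_comp IH).
  by have [] := hF (t + i).+1 _ (G_incr (t + i)%N).
exists (fun n => G n n).
  apply: homo_ltn => [? ? ?|n /=]; first exact: ltn_trans.
  apply: (G_incr n); have [F_incr _] := hF n.+1 _ (G_incr n).
  exact: increasing_geq_id F_incr n.+1.
move=> i; apply: (Qtail i (G i) _ (fun t => H i t (t + i)%N)).
- by case: i => [|i] /=; [have [] := hF 0%N id (fun m k mk => mk)
                         | have [] := hF i.+1 _ (G_incr i)].
- apply: homo_ltn => [? ? ?|t /=]; first exact: ltn_trans.
  apply: (H_incr i); have [F_incr _] := hF (t + i).+1 _ (G_incr (t + i)%N).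
  by apply: leq_trans (increasing_geq_id F_incr _); rewrite addSn.
- by move=> n; rewrite GH.
Qed.

Section FiniteCoordinates.
Context {R : realType} {b : bool}.
Local Notation K := (lcs_field R b).
Context {F : preTopologicalLmodType K} {G : nat -> preTopologicalLmodType K}.
Context {P : forall k, {linear F -> G k}} {J : forall k, {linear G k -> F}}.
Hypotheses (P_cont : forall k, continuous (P k)) (J_cont : forall k, continuous (J k)).

Lemma wCSP_finite_coordinates {p : \bar R} {x : nat -> F} :
  (1 <= p)%E -> (forall k, wCSP (E := G k) p) -> tvs_bounded (range x) ->
  (forall chi : {linear F -> K^o}, continuous chi -> exists N, forall m n,
     chi (x m - x n) = \sum_(k < N) chi (J k (P k (x m - x n)))) ->
  exists2 f, {homo f : m n / (m < n)%N} & weakly_Cauchy p (x \o f).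
Proof.
move=> p1 wG xb xfin.
have [d d_incr Pxd] : exists2 d, {homo d : m n / (m < n)%N} &
    forall k, weakly_Cauchy p (P k \o x \o d).
  apply: diagonal_subsequence => [k s s_incr|k s t h Pxs h_incr tsh].
    have Pxs_b := tvs_bounded_linear (P_cont k) (tvs_bounded_subseq s xb).
    by have [f f_incr Pxsf] := wG k _ Pxs_b; exists f.
  by apply: (weakly_Cauchy_tail (i := k) h_incr _ Pxs) => n /=; rewrite tsh.
exists d => // k j k_incr j_incr.
apply: weakly_summable_decomp p1 _ => chi cchi; have [N chiN] := xfin chi cchi.
exists N, (fun m n => (chi \o J m) (P m (x (d (k n))) - P m (x (d (j n))))); split.
  move=> m _; apply: (Pxd m k j k_incr j_incr (chi \o J m)).
  by move=> z; exact: continuous_comp (J_cont m z) (cchi _).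
by move=> n /=; rewrite chiN; apply: eq_bigr => m _ /=; rewrite [P m _]linearB.
Qed.

End FiniteCoordinates.

Lemma convex_setP {K : numDomainType} {M : lmodType K} {C : set M} {l : K} {x y : M} :
  convex_set (C : set (convex_lmodType M)) -> 0 <= l -> l <= 1 -> C x -> C y ->
  C (l *: x + (1 - l) *: y).
Proof. by move=> cC l0 l1 Cx Cy; have := cC x y (Itv01 l0 l1); rewrite !inE; apply. Qed.

Section BalancedCore.
Context {K : numFieldType} {E : tvsType K}.

Lemma convex_scale_mem {C : set E} (y : E) (a : K) :
  convex_set (C : set (convex_lmodType E)) -> C 0 -> C y ->
  0 <= a -> a <= 1 -> C (a *: y).
Proof.
by move=> cC C0 Cy a0 a1; have := convex_setP cC a0 a1 Cy C0; rewrite scaler0 addr0.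
Qed.

Lemma convex_real_scale_mem {C : set E} {y : E} {a : K} :
  convex_set (C : set (convex_lmodType E)) -> C 0 -> C y -> C (- y) ->
  a \is Num.real -> `|a| <= 1 -> C (a *: y).
Proof.
move=> cC C0 Cy CNy ar a1; have [a0|a0] := real_ge0P ar.
  by apply: convex_scale_mem => //; rewrite ger0_norm in a1.
rewrite -[a]opprK scaleNr -scalerN; apply: convex_scale_mem => //.
  by rewrite oppr_ge0 ltW.
by rewrite ltr0_norm in a1.
Qed.

Lemma nbhs0_scale_preimage {C : set E} {c : K} :
  c != 0 -> nbhs 0 C -> nbhs 0 [set x | C (c *: x)].
Proof.
move=> c0 C0; apply: filterS (nbhs0Z (invr_neq0 c0) C0) => _ [y Cy <-] /=.
by rewrite scalerA divff // scale1r.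
Qed.

Definition balanced_core (C : set E) : set E :=
  [set x | forall t : K, `|t| <= 1 -> C (t *: x)].

Lemma balanced_core_sub (C : set E) : balanced_core C `<=` C.
Proof. by move=> x Cx; rewrite -[x]scale1r; apply: Cx; rewrite normr1. Qed.

Lemma balanced_core_convex (C : set E) :
  convex_set (C : set (convex_lmodType E)) ->
  convex_set (balanced_core C : set (convex_lmodType E)).
Proof.
move=> cC x y l /set_mem Qx /set_mem Qy; apply/mem_set => t t1.
have := convex_setP cC (ge0 l) (le1 l) (Qx t t1) (Qy t t1).
by rewrite !scalerA ![_ * t]mulrC -!scalerA -scalerDr; apply.
Qed.

Lemma balanced_core_balanced (C : set E) : balanced_set (balanced_core C).
Proof.
move=> t t1 _ [x Qx <-] s s1; rewrite scalerA; apply: Qx.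
by rewrite normrM (le_trans (ler_pM _ _ s1 t1)) ?mulr1.
Qed.

Lemma nbhs0_real_core {C : set E} :
  nbhs 0 C -> convex_set (C : set (convex_lmodType E)) ->
  \forall x \near 0, forall t : K, t \is Num.real -> `|t| <= 1 -> C (t *: x).
Proof.
move=> C0 cC.
have N1 : (-1 : K) != 0 by rewrite oppr_eq0 oner_eq0.
have CN0 := nbhs0_scale_preimage N1 C0.
near=> x => t tr t1; apply: (convex_real_scale_mem cC) tr t1.
- exact: nbhs_singleton C0.
- by near: x.
- by rewrite -scaleN1r; near: x.
Unshelve. all: by end_near. Qed.

End BalancedCore.

Lemma nbhs0_balanced_core_real {K : realFieldType} {E : tvsType K} (C : set E) :
  nbhs 0 C -> convex_set (C : set (convex_lmodType E)) ->
  nbhs 0 (balanced_core C).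
Proof.
move=> C0 cC; apply: filterS (nbhs0_real_core C0 cC) => x Cx t.
exact/Cx/num_real.
Qed.

(* A complex [t] is a real-weighted midpoint: [t x = 1/2 (Re t)(2x) + 1/2 (Im t)(2ix)]. *)
Lemma nbhs0_balanced_core_closed {K : numClosedFieldType} {E : tvsType K}
    (C : set E) :
  nbhs 0 C -> convex_set (C : set (convex_lmodType E)) ->
  nbhs 0 (balanced_core C).
Proof.
move=> C0 cC; have Q0 := nbhs0_real_core C0 cC.
have two0 : (2 : K) != 0 by rewrite pnatr_eq0.
have two_i0 : (2 * 'i : K) != 0 by rewrite mulf_neq0 // -normr_eq0 normCi oner_eq0.
have Q2 := nbhs0_scale_preimage two0 Q0; have Q2i := nbhs0_scale_preimage two_i0 Q0.
near=> x => t t1.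
have C2x : forall s, s \is Num.real -> `|s| <= 1 -> C (s *: (2 *: x)) by near: x.
have C2ix : forall s, s \is Num.real -> `|s| <= 1 -> C (s *: ((2 * 'i) *: x)).
  by near: x.
have tE : t *: x = 2^-1 *: ('Re t *: (2 *: x)) +
                   (1 - 2^-1) *: ('Im t *: ((2 * 'i) *: x)).
  by rewrite {1}[t]Crect !scalerA scalerDl; congr (_ *: _ + _ *: _); field.
have Re1 : `|'Re t| <= 1 by apply: le_trans (leif_normC_Re_Creal t) t1.
have Im1 : `|'Im t| <= 1.
  by rewrite -normrN -ReMil (le_trans (leif_normC_Re_Creal _)) // normrM normCi mul1r.
have half_ge0 : (0 : K) <= 2^-1 by rewrite invr_ge0 ler0n.
have half_le1 : (2^-1 : K) <= 1 by rewrite invf_le1 ?ler1n ?ltr0n.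
rewrite tE; apply: (convex_setP cC half_ge0 half_le1).
- exact: C2x (Creal_Re t) Re1.
- exact: C2ix (Creal_Im t) Im1.
Unshelve. all: by end_near. Qed.

(** * Countable products *)

Section ProductCoordinates.
Context {K : numFieldType} (E : nat -> tvsType K).
Local Notation P := (prodLCS E).

Lemma prodLCS_addE (f g : P) i : (f + g) i = f i + g i. Proof. by []. Qed.
Lemma prodLCS_subE (f g : P) i : (f - g) i = f i - g i. Proof. by []. Qed.
Lemma prodLCS_scaleE (a : K) (f : P) i : (a *: f) i = a *: f i. Proof. by []. Qed.

Definition prod_proj (i : nat) (f : P) : E i := f i.

Let prod_proj_is_linear i : linear (prod_proj i). Proof. by []. Qed.

HB.instance Definition _ i :=
  GRing.isLinear.Build K P (E i) *:%R (prod_proj i) (prod_proj_is_linear i).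

Definition prod_inj (i : nat) (v : E i) : P := dfwith (fun j => 0 : E j) i v.

Let prod_inj_is_linear i : linear (prod_inj i).
Proof.
move=> a u v; apply: functional_extensionality_dep => j.
rewrite -[RHS]/(a *: prod_inj i u j + prod_inj i v j) /prod_inj.
have [<-|ij] := eqVneq i j; first by rewrite !dfwithin.
by rewrite !dfwithout // scaler0 addr0.
Qed.

HB.instance Definition _ i :=
  GRing.isLinear.Build K (E i) P *:%R (prod_inj i) (prod_inj_is_linear i).

Lemma prod_injK i : cancel (prod_inj i) (prod_proj i).
Proof. by move=> v; rewrite /prod_proj /prod_inj dfwithin. Qed.

Lemma prod_proj_continuous i : continuous (prod_proj i).
Proof. exact: proj_continuous. Qed.

Lemma prod_inj_continuous i : continuous (prod_inj i).
Proof. exact: dfwith_continuous. Qed.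

Lemma sum_prod_inj (N : nat) (y : P) (i : nat) :
  (\sum_(k < N) prod_inj k (prod_proj k y)) i = if (i < N)%N then y i else 0.
Proof.
elim: N => [|N IH]; first by rewrite big_ord0.
rewrite big_ord_recr /= prodLCS_addE IH ltnS /prod_inj.
have [->|iN] := eqVneq i N; first by rewrite ltnn leqnn dfwithin add0r.
by rewrite dfwithout 1?eq_sym // addr0 ltn_neqAle iN.
Qed.

(* Otherwise normalising witnesses [z_N] with [chi z_N <> 0] and vanishing
   coordinates below [N] would give a null sequence on which [chi] is 1. *)
Lemma prod_functional_finite {chi : {linear P -> K^o}} : continuous chi ->
  exists N, forall z : P, (forall i, (i < N)%N -> z i = 0) -> chi z = 0.
Proof.
move=> cchi; apply: contrapT => /forallNP chi_inf.
have /choice[z hz] : forall N, exists z : P,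
    (forall i, (i < N)%N -> z i = 0) /\ chi z != 0.
  move=> N; have /existsNP [z /not_implyP [z0 chiz]] := chi_inf N.
  by exists z; split => //; apply/eqP.
pose w N : P := (chi (z N))^-1 *: z N.
have chiw N : chi (w N) = 1.
  by rewrite linearZ /= [_ *: _]mulVf //; have [] := hz N.
have w0 : w @ \oo --> (0 : P).
  apply/cvg_sup => i U [V] [[W] oW <-] W0 WU.
  apply: (filterS WU); exists i.+1 => // n /= ni.
  by rewrite /w prodLCS_scaleE (proj1 (hz n) i ni) scaler0.
have := cvg_comp _ _ w0 (cchi 0); rewrite linear0.
have -> : chi \o w = fun=> 1 by apply: funext => n /=; exact: chiw.
move=> /(_ _ (@nbhs0_lt _ K^o _ ltr01))[n _ /(_ n (leqnn n))] /=.
by rewrite normr1 ltxx.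
Qed.

Lemma prod_functional_decomp {chi : {linear P -> K^o}} : continuous chi ->
  exists N, forall y : P, chi y = \sum_(k < N) chi (prod_inj k (prod_proj k y)).
Proof.
move=> cchi; have [N chiN] := prod_functional_finite cchi; exists N => y.
rewrite -linear_sum; apply/eqP; rewrite -subr_eq0 -linearB; apply/eqP/chiN => i iN.
by rewrite prodLCS_subE sum_prod_inj iN subrr.
Qed.

End ProductCoordinates.

Section ProductWCSP.
Context {R : realType} {b : bool} (E : nat -> tvsType (lcs_field R b)).

Lemma wCSP_prod (p : \bar R) : (1 <= p)%E ->
  (forall i, wCSP (E := E i) p) -> wCSP (E := prodLCS E) p.
Proof.
move=> p1 wE x xb.
apply: (wCSP_finite_coordinates (prod_proj_continuous E)
  (prod_inj_continuous E) p1 wE xb) => chi cchi.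
by have [N chiN] := prod_functional_decomp E cchi; exists N => m n; exact: chiN.
Qed.

Lemma wCSP_prod_factor {p : \bar R} (i : nat) :
  wCSP (E := prodLCS E) p -> wCSP (E := E i) p.
Proof.
exact: wCSP_retract (prod_inj_continuous E i) (prod_proj_continuous E i)
  (prod_injK E i).
Qed.

End ProductWCSP.

(** * Locally convex direct sums *)

Section DirectSumCoordinates.
Context {K : numFieldType} {I : Type} {E : I -> tvsType K}.
Local Notation D := (dsumLCS E).
Local Notation dsum_inj i := (@dsinj _ _ E i).

Definition dsum_proj (i : I) (x : D) : E i := proj1_sig x i.

Let dsum_proj_is_linear i : linear (dsum_proj i). Proof. by []. Qed.

HB.instance Definition _ i :=
  GRing.isLinear.Build K D (E i) *:%R (dsum_proj i) (dsum_proj_is_linear i).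

Lemma dsum_injK i : cancel (dsum_inj i) (dsum_proj i).
Proof.
move=> v; rewrite /dsum_proj /dsinj /= /dsinj_fun; case: pselect => // e.
by rewrite (Prop_irrelevance e erefl).
Qed.

Lemma dsum_proj_inj_neq i j v : i <> j -> dsum_proj j (dsum_inj i v) = 0.
Proof. by move=> ij; rewrite /dsum_proj /dsinj /= /dsinj_fun; case: pselect. Qed.

Lemma dsum_ext (x y : D) : (forall i, dsum_proj i x = dsum_proj i y) -> x = y.
Proof. by move=> h; apply: dsum_eq; apply: functional_extensionality_dep. Qed.

Let dsum_inj_is_linear i : linear (dsum_inj i).
Proof.
move=> a u v; apply: dsum_ext => j.
change (dsum_proj j (dsum_inj i (a *: u + v)) =
        a *: dsum_proj j (dsum_inj i u) + dsum_proj j (dsum_inj i v)).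
have [<-|ij] := pselect (i = j); first by rewrite !dsum_injK.
by rewrite !dsum_proj_inj_neq // scaler0 addr0.
Qed.

HB.instance Definition _ i :=
  GRing.isLinear.Build K (E i) D *:%R (dsum_inj i) (dsum_inj_is_linear i).

Lemma dsum_zero_nbhd_box (W : forall i, set (E i)) :
  (forall i, [/\ nbhs 0 (W i), convex_set (W i : set (convex_lmodType (E i)))
                 & balanced_set (W i)]) ->
  dsum_zero_nbhd [set y : D | forall i, W i (dsum_proj i y)].
Proof.
move=> hW; split.
- move=> y z l /set_mem Wy /set_mem Wz; apply/mem_set => i.
  have [_ cW _] := hW i.
  by have := cW _ _ l (mem_set (Wy i)) (mem_set (Wz i)); rewrite inE.
- move=> t t1 _ [y Wy <-] i; have [_ _ bW] := hW i.
  by apply: (bW t t1); exists (dsum_proj i y).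
- move=> j; have [W0 _ _] := hW j; apply: filterS W0 => v Wv i.
  have [<-|ji] := pselect (j = i); first by rewrite dsum_injK.
  by rewrite dsum_proj_inj_neq //; have [Wi0 _ _] := hW i; exact: nbhs_singleton.
Qed.

Lemma dsum_zero_nbhd_coord i (W : set (E i)) : nbhs 0 W ->
  convex_set (W : set (convex_lmodType (E i))) -> balanced_set W ->
  dsum_zero_nbhd [set y : D | W (dsum_proj i y)].
Proof.
move=> W0 cW bW; split.
- move=> y z l /set_mem Wy /set_mem Wz; apply/mem_set.
  by have := cW _ _ l (mem_set Wy) (mem_set Wz); rewrite inE.
- by move=> t t1 _ [y Wy <-] /=; apply: (bW t t1); exists (dsum_proj i y).
- move=> j; have [<-|ij] := pselect (i = j).
    apply: filterS W0 => v Wv.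
    by change (W (dsum_proj i (dsum_inj i v))); rewrite dsum_injK.
  apply: filterE => v; change (W (dsum_proj i (dsum_inj j v))).
  by rewrite dsum_proj_inj_neq; [exact: nbhs_singleton | exact: nesym].
Qed.

Lemma dsum_openE (A : set D) : open A = dsum_open A. Proof. by []. Qed.

Let half_neq0 : (2 : K)^-1 != 0. Proof. by rewrite invr_eq0 pnatr_eq0. Qed.

Lemma dsum_zero_nbhd_half {V : set D} : dsum_zero_nbhd V ->
  dsum_zero_nbhd [set (2 : K)^-1 *: v | v in V].
Proof.
move=> [cV bV nV]; split.
- move=> _ _ l /set_mem [a Va <-] /set_mem [c Vc <-]; apply/mem_set.
  have := cV a c l (mem_set Va) (mem_set Vc); rewrite inE => Vac.
  exists (l%:num *: a + (1 - l%:num) *: c) => //.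
  change (2^-1 *: (l%:num *: a + (1 - l%:num) *: c) =
          l%:num *: (2^-1 *: a) + (1 - l%:num) *: (2^-1 *: c)).
  by rewrite scalerDr !scalerA; congr (_ *: _ + _ *: _); exact: mulrC.
- move=> t t1 _ [_ [a Va <-] <-]; exists (t *: a).
    by apply: (bV t t1); exists a.
  by rewrite !scalerA mulrC.
- move=> j; apply: filterS (nbhs0Z half_neq0 (nV j)) => _ [u Vu <-] /=.
  by exists (dsum_inj j u) => //; rewrite linearZ.
Qed.

Lemma dsum_zero_nbhd_mid (V : set D) a c : dsum_zero_nbhd V -> V a -> V c ->
  V ((2 : K)^-1 *: a + (2 : K)^-1 *: c).
Proof.
move=> [cV _ _] Va Vc.
have half_ge0 : (0 : K) <= 2^-1 by rewrite invr_ge0 ler0n.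
have half_le1 : (2^-1 : K) <= 1 by rewrite invf_le1 ?ler1n ?ltr0n.
have := convex_setP cV half_ge0 half_le1 Va Vc.
by rewrite [X in X - _](splitr 1) mul1r addrK.
Qed.

Lemma dsum_zero_nbhd0 (i0 : I) {V : set D} : dsum_zero_nbhd V -> V 0.
Proof. by move=> [_ _ /(_ i0)/nbhs_singleton]; rewrite /= linear0. Qed.

(* The points [y] having some [y + V'] inside [V] form an open set around 0:
   halving [V'] gives room for [+ V'/2] around every point of [y + V'/2]. *)
Lemma nbhs0_dsum_zero_nbhd (i0 : I) (V : set D) : dsum_zero_nbhd V -> nbhs 0 V.
Proof.
move=> zV; rewrite nbhsE.
exists [set y : D | exists2 V', dsum_zero_nbhd V' & +%R y @` V' `<=` V]; last first.
  move=> y [V' zV' V'V]; rewrite -[y]addr0; apply: V'V.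
  by exists 0 => //; exact (dsum_zero_nbhd0 i0 zV').
split; last by exists V => // _ [v Vv <-]; rewrite add0r.
move=> y [V' zV' V'V]; have zV'2 := dsum_zero_nbhd_half zV'.
exists [set (2 : K)^-1 *: v | v in V'] => // _ [_ [a V'a <-] <-].
exists [set (2 : K)^-1 *: v | v in V'] => // _ [_ [c V'c <-] <-].
apply: V'V; exists (2^-1 *: a + 2^-1 *: c); last by rewrite addrA.
exact: dsum_zero_nbhd_mid.
Qed.

End DirectSumCoordinates.

Lemma lcs_field_archi {R : realType} {b : bool} (t : lcs_field R b) :
  exists M : nat, `|t| < M%:R.
Proof.
case: b t => t; last by exists (Num.bound `|t|); exact/archi_boundP/normr_ge0.
have tE : `|t| = (complex.Re `|t|)%:C%C by rewrite RRe_real // normr_real.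
exists (Num.bound (complex.Re `|t|)).
rewrite tE -(rmorph_nat (real_complex R)) ltcR.
exact: archi_boundP (@absK_ge0 R true t).
Qed.

Lemma nbhs0_balanced_core {R : realType} {b : bool} {E : tvsType (lcs_field R b)}
    (C : set E) :
  nbhs 0 C -> convex_set (C : set (convex_lmodType E)) ->
  nbhs 0 (balanced_core C).
Proof.
by case: b E C => E C; [exact: nbhs0_balanced_core_closed | exact: nbhs0_balanced_core_real].
Qed.

Section LcsNeighbourhoods.
Context {R : realType} {b : bool} {E : tvsType (lcs_field R b)}.

Lemma convex_balanced_nbhs0 {U : set E} : nbhs 0 U ->
  exists W : set E, [/\ nbhs 0 W, W `<=` U,
     convex_set (W : set (convex_lmodType E)) & balanced_set W].
Proof.
move=> U0; have [B B_convex [B_open B_basis]] := @locally_convex _ E.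
have [C [BC C0] CU] := B_basis 0 U U0.
have cC : convex_set (C : set (convex_lmodType E)) by apply: B_convex; rewrite inE.
have nC : nbhs 0 C by apply: open_nbhs_nbhs; split => //; exact: B_open.
exists (balanced_core C); split.
- exact: nbhs0_balanced_core.
- exact: subset_trans (@balanced_core_sub _ _ C) CU.
- exact: balanced_core_convex.
- exact: balanced_core_balanced.
Qed.

Lemma convex_balanced_nbhs0_avoid {q : E} : hausdorff_space E -> q != 0 ->
  exists W : set E, [/\ nbhs 0 W, convex_set (W : set (convex_lmodType E)),
     balanced_set W & ~ W q].
Proof.
move=> hE q0.
have /(hausdorff_accessible hE)[A [oA A0 Aq]] : (0 : E) != q by rewrite eq_sym.
have [W [W0 WA cW bW]] := convex_balanced_nbhs0 (open_nbhs_nbhs (conj oA (set_mem A0))).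
by exists W; split => // /WA; rewrite inE in Aq.
Qed.

End LcsNeighbourhoods.

Section DirectSumWCSP.
Context {R : realType} {b : bool}.
Local Notation K := (lcs_field R b).
Context {I : Type} {E : I -> tvsType K}.
Local Notation D := (dsumLCS E).
Local Notation dsum_inj i := (@dsinj _ _ E i).

Lemma dsum_proj_continuous i : continuous (dsum_proj (E := E) i).
Proof.
apply/continuousP => B oB; rewrite dsum_openE => y By.
have nB : nbhs (0 : E i) [set v | B (dsum_proj i y + v)].
  have := nbhsB (- dsum_proj i y) (open_nbhs_nbhs (conj oB By)).
  by rewrite addNr; apply: filterS => _ [u Bu <-]; rewrite /= addrA subrr add0r.
have [W [W0 WB cW bW]] := convex_balanced_nbhs0 nB.
exists [set z : D | W (dsum_proj i z)]; first exact: dsum_zero_nbhd_coord.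
by move=> _ [v Wv <-]; apply: WB.
Qed.

Lemma dsum_inj_continuous i : continuous (dsum_inj i).
Proof.
move=> v A; rewrite nbhsE => -[B [oB Bv] BA].
move: oB; rewrite dsum_openE => /(_ _ Bv)[V [_ _ /(_ i) V0] VB].
apply: filterS (nbhsT v V0) => _ [w Vw <-]; apply/BA/VB.
by exists (dsum_inj i w) => //; rewrite linearD.
Qed.

Lemma dsum_decomp {s : seq {classic I}} {y : D} : uniq s ->
  (forall i : {classic I}, i \notin s -> dsum_proj i y = 0) ->
  y = \sum_(i <- s) dsum_inj i (dsum_proj i y).
Proof.
move=> s_uniq y_supp; apply: dsum_ext => i.
have -> : dsum_proj i (\sum_(j <- s) dsum_inj j (dsum_proj j y)) =
          \sum_(j <- s) dsum_proj i (dsum_inj j (dsum_proj j y)).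
  exact: (raddf_sum (dsum_proj i)).
have [i_s|i_s] := boolP ((i : {classic I}) \in s); last first.
  rewrite y_supp // big1_seq // => j /andP[_ j_s].
  by apply: dsum_proj_inj_neq => ji; move: i_s; rewrite -ji j_s.
rewrite (bigD1_seq (i : {classic I})) // dsum_injK big1 => [|j /eqP ji].
  by rewrite /= addr0.
exact: dsum_proj_inj_neq.
Qed.

(* If infinitely many coordinates [i] were active, say [x(n_i)_i <> 0], the box
   of 0-neighbourhoods [W_i] missing [x(n_i)_i / (n_i + 1)] would not absorb
   [range x]: [x(n_i)] is outside [M * box] for any active [i] with [n_i >= M]. *)
Lemma dsum_bounded_finite_support (i0 : I) (x : nat -> D) :
  (forall i, hausdorff_space (E i)) -> tvs_bounded (range x) ->
  finite_set [set i | exists n, dsum_proj i (x n) != 0].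
Proof.
move=> hE xb; set U := [set i | _]; apply: contrapT => U_inf.
have sep i : exists nW : nat * set (E i), [/\ nbhs 0 nW.2,
    convex_set (nW.2 : set (convex_lmodType (E i))), balanced_set nW.2 &
    U i -> dsum_proj i (x nW.1) != 0 /\
           ~ nW.2 ((nW.1.+1%:R : K)^-1 *: dsum_proj i (x nW.1))].
  have [[n xn0]|notUi] := pselect (U i); last first.
    exists (0%N, setT); split.
    - exact: filterT.
    - by move=> ? ? ? _ _; rewrite inE.
    - by move=> ? _ ? _.
    - by move/notUi.
  have q0 : ((n.+1%:R : K)^-1 *: dsum_proj i (x n)) != 0.
    by rewrite scaler_eq0 negb_or invr_eq0 pnatr_eq0.
  have [W [W0 cW bW Wq]] := convex_balanced_nbhs0_avoid (hE i) q0.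
  by exists (n, W).
pose n i := (sval (cid (sep i))).1.
pose W i : set (E i) := (sval (cid (sep i))).2.
have nWP i : [/\ nbhs 0 (W i), convex_set (W i : set (convex_lmodType (E i))),
    balanced_set (W i) & U i -> dsum_proj i (x (n i)) != 0 /\
           ~ W i (((n i).+1%:R : K)^-1 *: dsum_proj i (x (n i)))].
  exact: svalP (cid (sep i)).
have V0 : nbhs (0 : D) [set y | forall i, W i (dsum_proj i y)].
  apply: (nbhs0_dsum_zero_nbhd i0); apply: dsum_zero_nbhd_box => i.
  by have [] := nWP i.
have [s s0 xV] := xb _ V0; have [M sM] := lcs_field_archi s.
have [i Ui Mi] : exists2 i, U i & (M <= n i)%N.
  apply: contrapT => /forall2NP small; apply: U_inf.
  apply: (@sub_finite_set _ _ (\bigcup_(k in `I_M) [set i | dsum_proj i (x k) != 0])).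
    move=> i Ui; exists (n i); last by have [_ _ _ /(_ Ui)[]] := nWP i.
    by rewrite /= ltnNge; apply/negP => Mi; have [] := small i.
  by apply: bigcup_finite => [|k _]; [exact: finite_II | exact: proj2_sig (x k)].
have sM' : s < M%:R by rewrite -(gtr0_norm s0).
have [y Vy xE] := xV M%:R sM' _ (ex_intro2 _ _ (n i) Logic.I erefl).
have [_ _ bW /(_ Ui)[_]] := nWP i; apply.
rewrite -xE [dsum_proj i _]linearZ scalerA; apply: bW; last by exists (dsum_proj i y).
rewrite normrM normfV !normr_nat mulrC ler_pdivrMr ?ltr0n // mul1r ler_nat.
exact: leqW.
Qed.

Lemma wCSP_dsum {p : \bar R} (i0 : I) : (1 <= p)%E ->
  (forall i, hausdorff_space (E i)) ->
  (forall i, wCSP (E := E i) p) -> wCSP (E := D) p.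
Proof.
move=> p1 hE wE x xb.
have /finite_seqP[s0 s0E] : finite_set [set i : {classic I} | exists n, dsum_proj i (x n) != 0].
  exact: dsum_bounded_finite_support i0 x hE xb.
pose s := undup s0; pose ix k : {classic I} := nth i0 s k.
have x_supp m n (i : {classic I}) : i \notin s -> dsum_proj i (x m - x n) = 0.
  rewrite mem_undup => i_s.
  have x0 k : dsum_proj i (x k) = 0.
    apply/eqP; apply: contraNT i_s => xk0.
    have : [set` s0] i by rewrite -s0E; exists k.
    by apply.
  by change (dsum_proj i (x m) - dsum_proj i (x n) = 0); rewrite !x0 subrr.
apply: (wCSP_finite_coordinates (P := fun k => dsum_proj (E := E) (ix k))
  (J := fun k => dsum_inj (ix k)) (fun k => dsum_proj_continuous (ix k))
  (fun k => dsum_inj_continuous (ix k)) p1 (fun k => wE (ix k)) xb) => chi _.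
exists (size s) => m n.
by rewrite {1}(dsum_decomp (undup_uniq s0) (x_supp m n)) linear_sum (big_nth i0) big_mkord.
Qed.

Lemma wCSP_dsum_factor {p : \bar R} (i : I) :
  wCSP (E := D) p -> wCSP (E := E i) p.
Proof.
exact: wCSP_retract (dsum_inj_continuous i) (dsum_proj_continuous i) (@dsum_injK _ _ E i).
Qed.

End DirectSumWCSP.

Theorem propositionp (R : realType) (b : bool) (p : \bar R) :
  (1 <= p)%E ->
  (forall E : nat -> tvsType (lcs_field R b),
     (forall i, hausdorff_space (E i)) ->
     (wCSP (E := prodLCS E) p <-> forall i, wCSP (E := E i) p)) /\
  (forall (I : Type) (E : I -> tvsType (lcs_field R b)),
     inhabited I ->
     (forall i, hausdorff_space (E i)) ->
     (wCSP (E := dsumLCS E) p <-> forall i, wCSP (E := E i) p)).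
Proof.
move=> p1; split => [E _|I E [i0] hE]; split.
- by move=> wP i; apply: wCSP_prod_factor.
- exact: wCSP_prod.
- by move=> wD i; apply: wCSP_dsum_factor.
- exact: wCSP_dsum i0 p1 hE.
Qed.
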